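(* If $X$ is a regular set star Hurewicz space, then every closed discrete subspace of $X$ has cardinality less than $\mathfrak c$. Hence $e(X)\leq\mathfrak c$.
   Context: For a family $\mathcal U$ of subsets of $X$ and $A\subseteq X$, $st(A,\mathcal U)=\bigcup\{U\in\mathcal U: U\cap A\neq\emptyset\}$. $X$ is set star Hurewicz if for every nonempty $A\subseteq X$ and every sequence $(\mathcal U_n:n\in\omega)$ of families of open subsets with $\overline A\subseteq\bigcup\mathcal U_n$ for all $n$, there are finite $\mathcal V_n\subseteq\mathcal U_n$ such that every $x\in A$ belongs to $st(\bigcup\mathcal V_n,\mathcal U_n)$ for all but finitely many $n$. $e(X)$ is the supremum of cardinalities of closed discrete subsets; $\mathfrak c=2^{\aleph_0}$. *)

From HB Require Import structures.
From mathcomp Require Import all_boot all_order.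
From mathcomp Require Import all_classical all_reals all_analysis.
Set Implicit Arguments. Unset Strict Implicit. Unset Printing Implicit Defensive.
Local Open Scope classical_set_scope.

Definition star {T : Type} (A : set T) (U : set (set T)) : set T :=
  [set x | exists2 V, U V & (V `&` A !=set0 /\ V x)].

Definition set_star_hurewicz (T : topologicalType) : Prop :=
  forall (A : set T), A !=set0 ->
  forall (Us : nat -> set (set T)),
    (forall n, Us n `<=` open) ->
    (forall n, closure A `<=` \bigcup_(V in Us n) V) ->
    exists Vs : nat -> set (set T),
      (forall n, finite_set (Vs n) /\ Vs n `<=` Us n) /\
      (forall x, A x -> exists N : nat, forall n, (N <= n)%N ->
          star (\bigcup_(V in Vs n) V) (Us n) x).

Definition closed_discrete (T : topologicalType) (D : set T) : Prop :=
  closed D /\ forall x, D x -> exists U : set T, [/\ open U, U x & U `&` D = [set x]].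

From HB Require Import structures.
From mathcomp Require Import all_boot all_order.
From mathcomp Require Import all_classical all_reals all_analysis.
From Stdlib Require Cantor.
Local Open Scope classical_set_scope.
Local Open Scope card_scope.

(* By regularity, every point d of a closed discrete set D has an open
   neighbourhood B d whose closure meets D only in d.  Suppose D contained an
   injective image of the Baire space under f, and let every x code, at each
   stage n, a finite set of points y; put U n x := B (f x) minus the closures
   of the B (f y) over the points y <> x coded by x at stage n.  Since f x lies
   in U n y only for y = x, finite selections V_n from the covers (U n y)_y are
   defeated by a diagonal x that codes, at every stage n, indices of all
   members of V_n and differs from them: U n x then misses every member of
   V_n, so f x never lies in st(\bigcup V_n, (U n y)_y).  Hence D contains no
   copy of the continuum, and |D| <= c follows by comparability of cardinals. *)

Lemma regular_closed_separation {X : topologicalType} (C : set X) (x : X) :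
  regular_space X -> closed C -> ~ C x ->
  exists B : set X, [/\ open B, B x & closure B `<=` ~` C].
Proof.
move=> reg cC Cx.
have /reg[N Nx NC] : nbhs x (~` C).
  by apply: open_nbhs_nbhs; split => //; exact: closed_openC.
move: Nx; rewrite nbhsE => -[B [oB Bx] BN].
by exists B; split => // y /(closureS BN) /NC.
Qed.

Lemma closed_discrete_subset_closed {X : topologicalType} {D E : set X} :
  closed_discrete D -> E `<=` D -> closed E.
Proof.
move=> [cD isoD] ED y Ey.
have [U [oU Uy UD]] := isoD y (cD y (closureS ED Ey)).
have [e [Ee Ue]] := Ey U (open_nbhs_nbhs (conj oU Uy)).
have : (U `&` D) e by split => //; exact: ED.
by rewrite UD => /= ey; rewrite -ey.
Qed.

Lemma closed_discrete_isolating_nbhs {X : topologicalType} {D : set X} :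
  regular_space X -> closed_discrete D ->
  exists B : X -> set X, forall d, D d ->
    [/\ open (B d), B d d & forall e, D e -> closure (B d) e -> e = d].
Proof.
move=> reg cdD.
have /choice[B HB] : forall d, exists B : set X, D d ->
    [/\ open B, B d & forall e, D e -> closure B e -> e = d].
  move=> d; have [_|nDd] := pselect (D d); last by exists setT => /nDd.
  have cDd : closed (D `\ d).
    by apply: (closed_discrete_subset_closed cdD) => ? [].
  have [B [oB Bd BDd]] :=
    regular_closed_separation _ _ reg cDd (fun Dd => Dd.2 erefl).
  exists B => _; split => // e De /BDd DDe.
  by apply: contrapT => ed; apply: DDe.
by exists B.
Qed.

Definition diagonal_code {T : Type} (code : T -> nat -> set T) : Prop :=
  (forall x n, finite_set (code x n)) /\
  forall F : nat -> set T, (forall n, finite_set (F n)) ->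
    exists x, forall n, F n `<=` code x n /\ ~ F n x.

Section star_selection_diagonal.
Variables (X : topologicalType) (T : choiceType) (code : T -> nat -> set T).
Variables (f : T -> X) (B : T -> set X).
Hypotheses (code_diag : diagonal_code code) (B_open : forall y, open (B y)).
Hypotheses (B_f : forall y, B y (f y))
  (B_sep : forall x y, closure (B y) (f x) -> x = y).

Let U n x := B x `\` \bigcup_(y in code x n `\ x) closure (B y).

Let U_open n x : open (U n x).
Proof.
rewrite /U setDE; apply: openI => //; apply: closed_openC.
apply: closed_bigcup => [|y _]; last exact: closed_closure.
exact/finite_setD/code_diag.1.
Qed.

Let U_sub n x : U n x `<=` B x. Proof. by move=> z []. Qed.

Let U_f n x : U n x (f x).
Proof. by split => // -[y [_ yx]] /B_sep xy; apply: yx. Qed.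

Let U_inj n : injective (U n).
Proof.
move=> x y Uxy; have := U_f n x; rewrite Uxy.
by move=> /U_sub /subset_closure /B_sep.
Qed.

Lemma not_set_star_hurewicz_diagonal :
  closed (range f) -> ~ set_star_hurewicz X.
Proof.
move=> cf ssh.
have [x0 _] := code_diag.2 (fun=> set0) (fun=> finite_set0 _).
have Ucover n : closure (range f) `<=` \bigcup_(V in range (U n)) V.
  by move=> _ /cf[x _ <-]; exists (U n x) => //; exists x.
have Uopen n : range (U n) `<=` open by move=> _ [x _ <-].
have [Vs [VsU Vs_star]] :=
  ssh (range f) (ex_intro _ (f x0) (imageT f x0)) _ Uopen Ucover.
pose F n := U n @^-1` Vs n.
have Ffin n : finite_set (F n).
  by apply: finite_preimage (VsU n).1 => x y _ _; exact: U_inj.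
have [x /all_and2[Fx xF]] := code_diag.2 F Ffin.
have [N /(_ N (leqnn N))] := Vs_star (f x) (imageT f x).
move=> [_ [y _ <-] [[z [Uyz [V VsV Vz]]] Uyfx]].
have xy : x = y by apply: B_sep; apply: subset_closure; exact: U_sub Uyfx.
subst y; have [w _ UwV] := (VsU N).2 V VsV.
have Fw : F N w by rewrite /F /= UwV.
case: Uyz => _; apply; exists w.
  by split; [exact: Fx | move=> wx; apply: (xF N); rewrite -wx].
by apply: subset_closure; apply: (U_sub N); rewrite UwV.
Qed.

End star_selection_diagonal.

Lemma closed_discrete_no_diagonal_injection {X : topologicalType}
    {T : choiceType} {code : T -> nat -> set T} {D : set X} {f : T -> X} :
  regular_space X -> set_star_hurewicz X -> closed_discrete D ->
  diagonal_code code -> injective f -> ~ range f `<=` D.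
Proof.
move=> reg ssh cdD code_diag finj fD.
have [B HB] := closed_discrete_isolating_nbhs reg cdD.
have Dfy y : D (f y) by apply: fD; exists y.
apply: (@not_set_star_hurewicz_diagonal X T code f (B \o f) code_diag) => //.
- by move=> y; have [] := HB _ (Dfy y).
- by move=> y; have [] := HB _ (Dfy y).
- by move=> x y cl; apply: finj; have [_ _] := HB _ (Dfy y); apply.
- exact: closed_discrete_subset_closed cdD fD.
Qed.

Definition baire_len (x : nat -> nat) (n : nat) : nat :=
  x (Cantor.to_nat (0, n)).

Definition baire_entry (x : nat -> nat) (n i : nat) : nat -> nat :=
  fun m => x (Cantor.to_nat ((Cantor.to_nat (n, i)).+2, m)).

Definition baire_code (x : nat -> nat) (n : nat) : set (nat -> nat) :=
  baire_entry x n @` `I_(baire_len x n).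

Lemma baire_code_finite x n : finite_set (baire_code x n).
Proof. exact/finite_image/finite_II. Qed.

Lemma baire_code_diagonal_seq (s : nat -> seq (nat -> nat)) :
  exists x, forall n, [set` s n] `<=` baire_code x n /\ ~ [set` s n] x.
Proof.
pose g n i := nth (fun=> 0) (s n) i.
(* Row 0 of x stores lengths, rows a+2 store entries, and row 1 makes x differ
   from every entry. *)
pose x m := let (a, b) := Cantor.of_nat m in
  match a with
  | 0 => size (s b)
  | 1 => let (n, i) := Cantor.of_nat b in (g n i m).+1
  | a.+2 => let (n, i) := Cantor.of_nat a in g n i b
  end.
have len_x n : baire_len x n = size (s n).
  by rewrite /baire_len /x Cantor.cancel_of_to.
have entry_x n i : baire_entry x n i = g n i.
  by apply: funext => m; rewrite /baire_entry /x !Cantor.cancel_of_to.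
have x_neq n i : x <> g n i.
  move=> /(congr1 (fun h => h (Cantor.to_nat (1, Cantor.to_nat (n, i))))).
  by rewrite {1}/x !Cantor.cancel_of_to => /esym /n_Sn.
exists x => n; split => [y sy|sx].
  exists (index y (s n)); first by rewrite len_x /= index_mem.
  by rewrite entry_x /g nth_index.
by apply: (x_neq n (index x (s n))); rewrite /g nth_index.
Qed.

Lemma baire_code_diagonal : diagonal_code baire_code.
Proof.
split=> [|F Ffin]; first exact: baire_code_finite.
have [s Fs] := choice (fun n => (finite_seqP (F n)).1 (Ffin n)).
have [x Hx] := baire_code_diagonal_seq s.
by exists x => n; rewrite Fs.
Qed.

Definition graph_indicator (x : nat -> nat) : nat -> bool :=
  fun m => x (Cantor.of_nat m).1 == (Cantor.of_nat m).2.

Lemma graph_indicator_inj : injective graph_indicator.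
Proof.
move=> x y exy; apply: funext => a.
have := congr1 (fun h => h (Cantor.to_nat (a, x a))) exy.
by rewrite /graph_indicator Cantor.cancel_of_to eqxx => /esym /eqP.
Qed.

Definition injective_relation {T U : Type} (A : set T) (G : set (T * U)) :=
  [/\ forall p, G p -> A p.1,
      forall a b b', G (a, b) -> G (a, b') -> b = b' &
      forall a a' b, G (a, b) -> G (a', b) -> a = a'].

Lemma injective_relation_bigcup {T U : Type} (A : set T)
    (F : set (set (T * U))) :
  F `<=` injective_relation A -> total_on F subset ->
  injective_relation A (\bigcup_(G in F) G).
Proof.
move=> FA Ftot.
have chain p q : (\bigcup_(G in F) G) p -> (\bigcup_(G in F) G) q ->
    exists2 G, F G & G p /\ G q.
  move=> [G1 F1 G1p] [G2 F2 G2q]; have [s12|s21] := Ftot _ _ F1 F2.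
    by exists G2 => //; split => //; exact: s12.
  by exists G1 => //; split => //; exact: s21.
split.
- by move=> p [G FG Gp]; have [GA _ _] := FA G FG; exact: GA.
- move=> a b b' Gb Gb'; have [G FG [Gab Gab']] := chain _ _ Gb Gb'.
  by have [_ Gfun _] := FA G FG; exact: Gfun Gab Gab'.
- move=> a a' b Ga Ga'; have [G FG [Gab Ga'b]] := chain _ _ Ga Ga'.
  by have [_ _ Ginj] := FA G FG; exact: Ginj Gab Ga'b.
Qed.

Lemma injective_relation_setU1 {T U : Type} (A : set T) (G : set (T * U))
    (a : T) (b : U) :
  injective_relation A G -> A a ->
  (forall b', ~ G (a, b')) -> (forall a', ~ G (a', b)) ->
  injective_relation A (G `|` [set (a, b)]).
Proof.
move=> [GA Gfun Ginj] Aa aG Gb; split.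
- by move=> [a' b'] [/GA //|[-> _]].
- move=> a1 b1 b2 [G1|[e1 ->]] [G2|[e2 ->]] //.
  + exact: Gfun G1 G2.
  + by case: (aG b1); rewrite -e2.
  + by case: (aG b2); rewrite -e1.
- move=> a1 a2 b1 [G1|[-> e1]] [G2|[-> e2]] //.
  + exact: Ginj G1 G2.
  + by case: (Gb a1); rewrite -e2.
  + by case: (Gb a2); rewrite -e1.
Qed.

Lemma card_le_setT_or_inj {T : Type} (U : pointedType) (A : set T) :
  A #<= [set: U] \/ exists2 g : U -> T, injective g & range g `<=` A.
Proof.
have [G [[GA Gfun Ginj] Gmax]] :=
  Zorn_bigcup (@injective_relation_bigcup T U A).
have [Gtot|] := pselect (forall a, A a -> exists b, G (a, b)).
  left; apply/pcard_injP.
  have /choice[f Gf] : forall a, exists b, A a -> G (a, b).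
    move=> a; have [/Gtot[b Gab]|nAa] := pselect (A a); first by exists b.
    by exists point.
  exists f => a a' /set_mem Aa /set_mem Aa' faa'.
  by apply: Ginj (Gf a Aa) _; rewrite faa'; exact: Gf.
move=> /existsNP[a0 /not_implyP[Aa0 /forallNP a0G]].
have [Gsurj|] := pselect (forall b, exists a, G (a, b)).
  right; have [g Gg] := choice Gsurj; exists g.
    move=> u v guv; apply: (Gfun (g u)); first exact: Gg.
    by rewrite guv; exact: Gg.
  by move=> _ [u _ <-]; exact: GA (Gg u).
move=> /existsNP[b0 /forallNP Gb0]; exfalso.
apply: (Gmax (G `|` [set (a0, b0)])); last exact: injective_relation_setU1.
split; first by move=> p Gp; left.
by move=> /(_ (a0, b0) (or_intror erefl)); exact: a0G.
Qed.

Lemma card_setT_le_inj {T U : Type} (A : set T) :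
  [set: U] #<= A -> exists2 g : U -> T, injective g & range g `<=` A.
Proof.
move=> /card_leP[F].
pose g (u : U) := \val (F (SigSub (mem_set (I : [set: U] u)))).
exists g; last by move=> _ [u _ <-]; exact: set_mem (valP _).
move=> u v /val_inj guv.
by have /(congr1 val) := @inj _ _ _ F _ _ (mem_set I) (mem_set I) guv.
Qed.

Theorem theorem4p2 (X : topologicalType) :
  accessible_space X -> regular_space X -> set_star_hurewicz X ->
  forall D : set X, closed_discrete D ->
    D #<= [set: nat -> bool] /\ ~ ([set: nat -> bool] #<= D).
Proof.
move=> _ reg ssh D cdD.
have no_cantor_inj (g : (nat -> bool) -> X) : injective g -> ~ range g `<=` D.
  move=> ginj gD; apply: (closed_discrete_no_diagonal_injection reg ssh cdD
    baire_code_diagonal (inj_comp ginj graph_indicator_inj)).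
  by move=> _ [x _ <-]; apply: gD; exists (graph_indicator x).
split.
- have [//|[g ginj gD]] := card_le_setT_or_inj (nat -> bool) D.
  by case: (no_cantor_inj g ginj gD).
- by move=> /card_setT_le_inj[g ginj gD]; exact: no_cantor_inj ginj gD.
Qed.
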